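(* Let $t^k_{\alpha\beta}=\operatorname{tr}(W_\alpha V_\beta Z^k)=V_\beta Z^kW_\alpha$ for $k\in\mathbb N$, $\alpha,\beta\in\{1,\dots,d\}$, regarded as regular functions on $\mathcal C^\times_{n,d,q}$. Then (1) $\{\operatorname{tr}Z^i,t^k_{\beta\alpha}\}=0$ for all $i\ge1$, $k\ge0$ and all $\alpha,\beta$; (2) for all $\alpha,\beta,\gamma,\epsilon$ and $k,l\ge1$, $$\begin{aligned}\{t^k_{\gamma\epsilon},t^l_{\alpha\beta}\}=&\tfrac12[o(\gamma,\beta)+o(\epsilon,\alpha)-o(\epsilon,\beta)-o(\gamma,\alpha)]t^k_{\gamma\epsilon}t^l_{\alpha\beta}+\tfrac12o(\gamma,\beta)t^{k+l}_{\alpha\epsilon}t^0_{\gamma\beta}+\tfrac12o(\epsilon,\alpha)t^0_{\alpha\epsilon}t^{k+l}_{\gamma\beta}\\&-\tfrac12o(\epsilon,\beta)t^l_{\alpha\epsilon}t^k_{\gamma\beta}-\tfrac12o(\gamma,\alpha)t^k_{\alpha\epsilon}t^l_{\gamma\beta}-\delta_{\gamma\beta}\big[t^{k+l}_{\alpha\epsilon}+\tfrac12t^{k+l}_{\alpha\epsilon}t^0_{\gamma\beta}+\tfrac12t^k_{\gamma\epsilon}t^l_{\alpha\beta}\big]\\&+\delta_{\alpha\epsilon}\big[t^{k+l}_{\gamma\beta}+\tfrac12t^0_{\alpha\epsilon}t^{k+l}_{\gamma\beta}+\tfrac12t^k_{\gamma\epsilon}t^l_{\alpha\beta}\big]\\&+\tfrac12\Big[\sum_{\tau=1}^kt^{k-\tau}_{\gamma\beta}t^{l+\tau}_{\alpha\epsilon}-\sum_{\tau=1}^{k-1}t^{k+l-\tau}_{\gamma\beta}t^\tau_{\alpha\epsilon}\Big]-\tfrac12\Big[\sum_{\sigma=1}^lt^{k+\sigma}_{\gamma\beta}t^{l-\sigma}_{\alpha\epsilon}-\sum_{\sigma=1}^{l-1}t^\sigma_{\gamma\beta}t^{k+l-\sigma}_{\alpha\epsilon}\Big],\end{aligned}$$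 and this formula remains valid when $k=0$ or $l=0$ (or both) provided the final four sums are omitted.
   Context: Fix integers $n\ge1$, $d\ge1$ and $q\in\mathbb C^\times$ not a root of unity. Greek indices range over $\{1,\dots,d\}$; set $o(\alpha,\beta)=0$ if $\alpha=\beta$, $o(\alpha,\beta)=1$ if $\alpha<\beta$, $o(\alpha,\beta)=-1$ if $\alpha>\beta$. Let $\mathcal M^\times_{n,d,q}$ be the affine variety of tuples $(X,Z,V_1,\dots,V_d,W_1,\dots,W_d)$ with $X,Z\in\mathrm{GL}_n(\mathbb C)$, $V_\alpha\in\mathrm{Mat}_{1\times n}(\mathbb C)$, $W_\alpha\in\mathrm{Mat}_{n\times 1}(\mathbb C)$, such that every $\mathrm{Id}_n+W_\alpha V_\alpha$ is invertible and $XZX^{-1}Z^{-1}(\mathrm{Id}_n+W_1V_1)^{-1}\cdots(\mathrm{Id}_n+W_dV_d)^{-1}=q\,\mathrm{Id}_n$. $\mathrm{GL}_n$ acts by $g\cdot(X,Z,V_\alpha,W_\alpha)=(gXg^{-1},gZg^{-1},V_\alpha g^{-1},gW_\alpha)$; the action is free and $\mathcal C^\times_{n,d,q}=\mathcal M^\times_{n,d,q}/\!/\mathrm{GL}_n$ is a smooth affine variety of dimension $2nd$ with $\mathbb C[\mathcal C^\times_{n,d,q}]=\mathbb C[\mathcal M^\times_{n,d,q}]^{\mathrm{GL}_n}$. Write $V_{\alpha,j}$, $W_{\alpha,k}$ for the entries. Let $\{-,-\}$ be the antisymmetric biderivation on functions of $(X,Z,V_\alpha,W_\alpha)$ (Van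 den Bergh's quasi-Poisson bracket) given by $\{X_{ij},X_{kl}\}=\tfrac12(\delta_{il}(X^2)_{kj}-\delta_{kj}(X^2)_{il})$, $\{Z_{ij},Z_{kl}\}=\tfrac12(\delta_{kj}(Z^2)_{il}-\delta_{il}(Z^2)_{kj})$, $\{X_{ij},Z_{kl}\}=\tfrac12((ZX)_{kj}\delta_{il}+\delta_{kj}(XZ)_{il}+Z_{kj}X_{il}-X_{kj}Z_{il})$, $\{U_{ij},W_{\alpha,k}\}=\tfrac12(\delta_{kj}(UW_\alpha)_i-U_{kj}W_{\alpha,i})$, $\{U_{ij},V_{\alpha,l}\}=\tfrac12((V_\alpha U)_j\delta_{il}-V_{\alpha,j}U_{il})$ for $U\in\{X,Z\}$, $\{V_{\alpha,j},V_{\beta,l}\}=\tfrac12 o(\beta,\alpha)(V_{\beta,j}V_{\alpha,l}+V_{\alpha,j}V_{\beta,l})$, $\{W_{\alpha,i},W_{\beta,k}\}=\tfrac12 o(\beta,\alpha)(W_{\beta,k}W_{\alpha,i}+W_{\alpha,k}W_{\beta,i})$, $\{V_{\alpha,j},W_{\beta,k}\}=\delta_{\alpha\beta}(\delta_{kj}+\tfrac12W_{\alpha,k}V_{\alpha,j}+\tfrac12\delta_{kj}V_\alpha W_\alpha)+\tfrac12 o(\alpha,\beta)(\delta_{kj}V_\alpha W_\beta+W_{\beta,k}V_{\alpha,j})$. Restricted to $\mathrm{GL}_n$-invariant functions this bracket induces a non-degenerate Poisson bracket on $\mathcal C^\times_{n,d,q}$ (quasi-Hamiltonian reduction); this is the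 Poisson bracket $\{-,-\}$ on $\mathcal C^\times_{n,d,q}$. *)

From HB Require Import structures.
From mathcomp Require Import all_boot all_order all_algebra.
Set Implicit Arguments. Unset Strict Implicit. Unset Printing Implicit Defensive.
Import Order.TTheory GRing.Theory Num.Theory.
Local Open Scope ring_scope.

(* A point (X, Z, V, W) of Mat_n x Mat_n x Mat_{1xn}^d x Mat_{nx1}^d is encoded as
   X Z : 'M_n, V : 'M_(d,n) (row alpha = V_alpha), W : 'M_(n,d) (column alpha = W_alpha).
   So V_{alpha,j} = V alpha j and W_{alpha,k} = W k alpha.  Greek indices are 'I_d
   (alpha in {1..d} corresponds to alpha-1), ordered by value. *)

(* Polynomial functions of (X, Z, V, W), given uniformly over all commutative rings
   (so that they can be evaluated on points with polynomial entries). *)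
Definition pfun (n d : nat) :=
  forall S : comNzRingType, 'M[S]_n -> 'M[S]_n -> 'M[S]_(d, n) -> 'M[S]_(n, d) -> S.

(* Coordinates: X_ij | Z_ij | V_{alpha,j} | W_{alpha,k} *)
Definition coord (n d : nat) : finType :=
  ((('I_n * 'I_n) + ('I_n * 'I_n)) + (('I_d * 'I_n) + ('I_d * 'I_n)))%type.

Section Deriv.
Variables (R : comNzRingType) (n d : nat).

Definition dX (c : coord n d) : 'M[{poly R}]_n :=
  match c with inl (inl (i, j)) => 'X *: delta_mx i j | _ => 0 end.
Definition dZ (c : coord n d) : 'M[{poly R}]_n :=
  match c with inl (inr (i, j)) => 'X *: delta_mx i j | _ => 0 end.
Definition dV (c : coord n d) : 'M[{poly R}]_(d, n) :=
  match c with inr (inl (a, j)) => 'X *: delta_mx a j | _ => 0 end.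
Definition dW (c : coord n d) : 'M[{poly R}]_(n, d) :=
  match c with inr (inr (a, k)) => 'X *: delta_mx k a | _ => 0 end.

(* partial derivative of F with respect to coordinate c, at the point (X,Z,V,W):
   the coefficient of s in F(p + s e_c) *)
Definition pderiv (F : pfun n d) (X Z : 'M[R]_n) (V : 'M[R]_(d, n)) (W : 'M[R]_(n, d))
  (c : coord n d) : R :=
  (F [the comNzRingType of {poly R}]
     (map_mx polyC X + dX c) (map_mx polyC Z + dZ c)
     (map_mx polyC V + dV c) (map_mx polyC W + dW c))`_1.
End Deriv.

Section Bracket.
Variables (R : fieldType) (n d : nat).
Implicit Types (i j k l : 'I_n) (a b : 'I_d).

Definition kd (T : eqType) (x y : T) : R := (x == y)%:R.

Definition ord_sign a b : R :=
  if a == b then 0 else if (val a < val b)%N then 1 else -1.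

Variables (X Z : 'M[R]_n) (V : 'M[R]_(d, n)) (W : 'M[R]_(n, d)).

(* {U_ij, W_{alpha,k}} for U in {X, Z} *)
Definition brUW (U : 'M[R]_n) i j a k : R :=
  2^-1 * (kd k j * (U *m W) i a - U k j * W i a).
(* {U_ij, V_{alpha,l}} for U in {X, Z} *)
Definition brUV (U : 'M[R]_n) i j a l : R :=
  2^-1 * ((V *m U) a j * kd i l - V a j * U i l).
Definition brXZ i j k l : R :=
  2^-1 * ((Z *m X) k j * kd i l + kd k j * (X *m Z) i l + Z k j * X i l - X k j * Z i l).
Definition brVW a j b k : R :=
  kd a b * (kd k j + 2^-1 * (W k a * V a j) + 2^-1 * (kd k j * (V *m W) a a))
  + 2^-1 * ord_sign a b * (kd k j * (V *m W) a b + W k b * V a j).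

(* Van den Bergh's quasi-Poisson bracket of two coordinate functions *)
Definition brc (c1 c2 : coord n d) : R :=
  match c1, c2 with
  | inl (inl (i, j)), inl (inl (k, l)) =>
      2^-1 * (kd i l * (X *m X) k j - kd k j * (X *m X) i l)
  | inl (inr (i, j)), inl (inr (k, l)) =>
      2^-1 * (kd k j * (Z *m Z) i l - kd i l * (Z *m Z) k j)
  | inl (inl (i, j)), inl (inr (k, l)) => brXZ i j k l
  | inl (inr (k, l)), inl (inl (i, j)) => - brXZ i j k l
  | inl (inl (i, j)), inr (inr (a, k)) => brUW X i j a k
  | inl (inr (i, j)), inr (inr (a, k)) => brUW Z i j a k
  | inr (inr (a, k)), inl (inl (i, j)) => - brUW X i j a k
  | inr (inr (a, k)), inl (inr (i, j)) => - brUW Z i j a k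
  | inl (inl (i, j)), inr (inl (a, l)) => brUV X i j a l
  | inl (inr (i, j)), inr (inl (a, l)) => brUV Z i j a l
  | inr (inl (a, l)), inl (inl (i, j)) => - brUV X i j a l
  | inr (inl (a, l)), inl (inr (i, j)) => - brUV Z i j a l
  | inr (inl (a, j)), inr (inl (b, l)) =>
      2^-1 * ord_sign b a * (V b j * V a l + V a j * V b l)
  | inr (inr (a, i)), inr (inr (b, k)) =>
      2^-1 * ord_sign b a * (W k b * W i a + W k a * W i b)
  | inr (inl (a, j)), inr (inr (b, k)) => brVW a j b k
  | inr (inr (b, k)), inr (inl (a, j)) => - brVW a j b k
  end.

Definition qbr (F G : pfun n d) : R :=
  \sum_(c : coord n d) \sum_(c' : coord n d)
     pderiv F X Z V W c * pderiv G X Z V W c' * brc c c'.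
End Bracket.

Definition inMx (R : numClosedFieldType) (n d : nat) (q : R)
  (X Z : 'M[R]_n) (V : 'M[R]_(d, n)) (W : 'M[R]_(n, d)) : Prop :=
  [/\ X \in unitmx, Z \in unitmx,
      (forall a : 'I_d, (1%:M + col a W *m row a V) \in unitmx) &
      X *m Z *m invmx X *m invmx Z
        *m (\prod_(a < d) invmx (1%:M + col a W *m row a V)) = q%:M].

Definition tfun (n d : nat) (k : nat) (a b : 'I_d) : pfun n d :=
  fun S X Z V W => (V *m Z ^+ k *m W) b a.

Definition trZ (n d : nat) (i : nat) : pfun n d :=
  fun S X Z V W => \tr (Z ^+ i).

From Pilot Require Import Defs.
From HB Require Import structures.
From mathcomp Require Import all_boot all_order all_algebra.
From mathcomp Require Import ring zify.
Import Order.TTheory GRing.Theory Num.Theory.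
Local Open Scope ring_scope.

(* The bracket qbr X Z V W F G is the biderivation sum_{c,c'} dF/dc dG/dc' {c,c'}
   evaluated at the point (X, Z, V, W); the theorem is therefore a pointwise
   polynomial identity, and it holds at every point of the full space over any
   field.

   1. Linear Taylor coefficients of matrix expressions give the partial
      derivatives of t^k and tr Z^i.  Neither depends on X, and the gradient of
      such a function is a triple (A, P, Q): dF = tr(A dZ) + tr(dV P) + tr(Q dW).
   2. For two X-free functions the double sum over coordinates splits into
      blocks; contracting the Kronecker deltas gives a closed formula for {F, G}
      in terms of traces of the gradients and three scalar V/W terms.
   3. Both t^k and tr Z^i satisfy the infinitesimal GL_n-invariance relation
      P V - W Q = Z A - A Z, which kills the mixed Z-V/W trace term.
   4. For tr Z^i the gradient A commutes with Z and P = Q = 0: this gives (1).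
      For t^k, t^l the Z-Z trace term produces the four sums (after reindexing)
      and the scalar terms produce the explicit quadratic terms: this gives (2). *)

Section FirstOrderCoefficients.
Variable R : comNzRingType.

Definition coef0_mx m p (M : 'M[{poly R}]_(m, p)) : 'M[R]_(m, p) :=
  map_mx (fun x : {poly R} => x`_0) M.
Definition coef1_mx m p (M : 'M[{poly R}]_(m, p)) : 'M[R]_(m, p) :=
  map_mx (fun x : {poly R} => x`_1) M.
Arguments coef0_mx {m p}. Arguments coef1_mx {m p}.

Lemma coef0_mxM m p r (M : 'M[{poly R}]_(m, p)) (N : 'M_(p, r)) :
  coef0_mx (M *m N) = coef0_mx M *m coef0_mx N.
Proof.
apply/matrixP => i j; rewrite !mxE coef_sum; apply: eq_bigr => k _.
by rewrite coefM big_ord1 !mxE.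
Qed.

Lemma coef1_mxM m p r (M : 'M[{poly R}]_(m, p)) (N : 'M_(p, r)) :
  coef1_mx (M *m N) = coef0_mx M *m coef1_mx N + coef1_mx M *m coef0_mx N.
Proof.
apply/matrixP => i j; rewrite !mxE coef_sum -big_split; apply: eq_bigr => k _ /=.
by rewrite coefM !big_ord_recl big_ord0 !mxE addr0.
Qed.

Lemma coef0_mxD m p (M N : 'M[{poly R}]_(m, p)) :
  coef0_mx (M + N) = coef0_mx M + coef0_mx N.
Proof. by apply/matrixP => i j; rewrite !mxE coefD. Qed.

Lemma coef1_mxD m p (M N : 'M[{poly R}]_(m, p)) :
  coef1_mx (M + N) = coef1_mx M + coef1_mx N.
Proof. by apply/matrixP => i j; rewrite !mxE coefD. Qed.

Lemma coef0_mx_const m p (A : 'M[R]_(m, p)) : coef0_mx (map_mx polyC A) = A.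
Proof. by apply/matrixP => i j; rewrite !mxE coefC. Qed.

Lemma coef1_mx_const m p (A : 'M[R]_(m, p)) : coef1_mx (map_mx polyC A) = 0.
Proof. by apply/matrixP => i j; rewrite !mxE coefC. Qed.

Lemma coef0_mx_dir m p (a : 'I_m) (b : 'I_p) :
  coef0_mx ('X *: (delta_mx a b : 'M[{poly R}]_(m, p))) = 0.
Proof. by apply/matrixP => i j; rewrite !mxE coefXM. Qed.

Lemma coef1_mx_dir m p (a : 'I_m) (b : 'I_p) :
  coef1_mx ('X *: (delta_mx a b : 'M[{poly R}]_(m, p))) = delta_mx a b.
Proof. by apply/matrixP => i j; rewrite !mxE coefXM /= coefMn coefC. Qed.

Lemma coef0_mx0 m p : coef0_mx (0 : 'M[{poly R}]_(m, p)) = 0.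
Proof. by apply/matrixP => i j; rewrite !mxE coef0. Qed.

Lemma coef1_mx0 m p : coef1_mx (0 : 'M[{poly R}]_(m, p)) = 0.
Proof. by apply/matrixP => i j; rewrite !mxE coef0. Qed.

Lemma coef0_mx_exp n (M : 'M[{poly R}]_n) k : coef0_mx (M ^+ k) = coef0_mx M ^+ k.
Proof.
elim: k => [|k IH].
  by apply/matrixP => i j; rewrite !mxE coefMn coefC /=; case: (i == j).
by rewrite !exprS -!mulmxE coef0_mxM IH.
Qed.

Lemma coef1_mx_exp n (M : 'M[{poly R}]_n) k :
  coef1_mx (M ^+ k) =
  \sum_(m < k) coef0_mx M ^+ m *m coef1_mx M *m coef0_mx M ^+ (k - m.+1).
Proof.
elim: k => [|k IH].
  by rewrite big_ord0; apply/matrixP => i j; rewrite !mxE coefMn coefC /=; case: (i == j).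
rewrite exprS -mulmxE coef1_mxM IH coef0_mx_exp big_ord_recl /= expr0 mul1mx subn1 /=.
rewrite addrC; congr (_ + _); rewrite mulmx_sumr; apply: eq_bigr => m _.
by rewrite exprS -!mulmxE !mulmxA subSS.
Qed.
End FirstOrderCoefficients.
Arguments coef0_mx {R m p}. Arguments coef1_mx {R m p}.

Section DeltaCalculus.
Variable R : fieldType.

Lemma kd_sym (T : eqType) (x y : T) : kd R x y = kd R y x.
Proof. by rewrite /kd eq_sym. Qed.

Lemma sum_kd_l {I : finType} (j : I) (F : I -> R) : \sum_k kd R k j * F k = F j.
Proof.
rewrite (bigD1 j) //= big1 => [|k kj]; first by rewrite /kd eqxx mul1r addr0.
by rewrite /kd (negbTE kj) mul0r.
Qed.

Lemma sum_kd_r {I : finType} (j : I) (F : I -> R) : \sum_k kd R j k * F k = F j.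
Proof. by rewrite -(sum_kd_l j); apply: eq_bigr => k _; rewrite kd_sym. Qed.

Lemma sum2_kd {I J : finType} (i : I) (j : J) (F : I -> J -> R) :
  \sum_x \sum_y kd R i x * kd R j y * F x y = F i j.
Proof.
rewrite -(sum_kd_r i (fun x => F x j)); apply: eq_bigr => x _.
rewrite -(sum_kd_r j (fun y => kd R i x * F x y)); apply: eq_bigr => y _; ring.
Qed.

Lemma mul_delta_entry_r p q r (M : 'M[R]_(p, q)) (i : 'I_q) (j : 'I_r) x y :
  (M *m delta_mx i j) x y = M x i * kd R j y.
Proof.
rewrite mxE (bigD1 i) //= big1 ?addr0 => [|z zi]; first by rewrite mxE eqxx /kd /= eq_sym.
by rewrite [delta_mx _ _ _ _]mxE (negbTE zi) mulr0.
Qed.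

Lemma mul_delta_entry_l p q r (M : 'M[R]_(q, r)) (i : 'I_p) (j : 'I_q) x y :
  (delta_mx i j *m M) x y = kd R x i * M j y.
Proof.
rewrite mxE (bigD1 j) //= big1 ?addr0 => [|z zj]; first by rewrite mxE eqxx andbT /kd /=.
by rewrite [delta_mx _ _ _ _]mxE (negbTE zj) andbF mul0r.
Qed.

Lemma mul_delta2_entry p q r s (M : 'M[R]_(q, r)) (i : 'I_p) (j : 'I_q)
    (u : 'I_r) (v : 'I_s) x y :
  (delta_mx i j *m M *m delta_mx u v) x y = kd R x i * M j u * kd R v y.
Proof. by rewrite mul_delta_entry_r mul_delta_entry_l. Qed.

Lemma mxtrace_deltaM m p (i : 'I_m) (j : 'I_p) (Y : 'M[R]_(p, m)) :
  \tr (delta_mx i j *m Y) = Y j i.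
Proof.
rewrite /mxtrace (eq_bigr (fun x => kd R x i * Y j x)) ?sum_kd_l // => x _.
by rewrite mul_delta_entry_l.
Qed.

Lemma entry_mxtrace_delta d (M : 'M[R]_d) (a b : 'I_d) : M b a = \tr (delta_mx a b *m M).
Proof. by rewrite mxtrace_deltaM. Qed.

Lemma mxtrace_mul_deltaM m p r (i : 'I_m) (j : 'I_p) (A : 'M[R]_(r, m)) (B : 'M[R]_(p, r)) :
  \tr (A *m delta_mx i j *m B) = (B *m A) j i.
Proof. by rewrite -mulmxA mxtrace_mulC -mulmxA mxtrace_deltaM. Qed.

Lemma mxtrace_delta2 d (i j u v : 'I_d) (Y Y' : 'M[R]_d) :
  \tr (delta_mx i j *m Y *m delta_mx u v *m Y') = Y j u * Y' v i.
Proof.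
rewrite /mxtrace (eq_bigr (fun x => kd R i x * (Y j u * Y' v x))) ?sum_kd_r // => x _.
rewrite mxE (eq_bigr (fun z => kd R v z * (kd R x i * Y j u * Y' z x))) => [|z _].
  by rewrite sum_kd_r kd_sym; ring.
by rewrite mul_delta2_entry; ring.
Qed.
End DeltaCalculus.
Arguments kd_sym {R T} x y. Arguments sum2_kd {R I J} i j F.
Arguments sum_kd_l {R I} j F. Arguments sum_kd_r {R I} j F.

Section Gradients.
Variable R : fieldType.

(* Gradient of an X-independent function: the value at coordinate c of the
   covector dF = tr(A dZ) + tr(dV P) + tr(Q dW). *)
Definition grad {n d} (A : 'M[R]_n) (P : 'M[R]_(n, d)) (Q : 'M[R]_(d, n))
    (c : Defs.coord n d) : R :=
  match c with
  | inl (inl _) => 0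
  | inl (inr (i, j)) => A j i
  | inr (inl (a, j)) => P j a
  | inr (inr (a, k)) => Q a k
  end.

(* The Z-gradient of Z |-> tr(N Z^k). *)
Definition pow_grad {n} (Z N : 'M[R]_n) k : 'M[R]_n :=
  \sum_(m < k) Z ^+ (k - m.+1) *m N *m Z ^+ m.

(* t^k_{ab} = V_b Z^k W_a = tr(e_{ab} V Z^k W) has gradient
   (pow_grad Z (W e_ab V) k, Z^k W e_ab, e_ab V Z^k). *)
Lemma pderiv_tfun n d k (a b : 'I_d) X Z V W c :
  pderiv (@tfun n d k a b) X Z V W c =
  grad (pow_grad Z (W *m delta_mx a b *m V) k) (Z ^+ k *m W *m delta_mx a b)
       (delta_mx a b *m V *m Z ^+ k) c.
Proof.
rewrite /pderiv /tfun.
have -> (M : 'M[{poly R}]_d) : (M b a)`_1 = coef1_mx M b a by rewrite mxE.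
rewrite !coef1_mxM !coef0_mxM coef0_mx_exp coef1_mx_exp.
rewrite !coef0_mxD !coef1_mxD !coef0_mx_const !coef1_mx_const.
case: c => [[[i j]|[i j]]|[[x j]|[x j]]] /=;
  rewrite ?coef0_mx0 ?coef1_mx0 ?coef0_mx_dir ?coef1_mx_dir ?addr0 ?mulmx0 ?mul0mx ?add0r ?addr0.
- by rewrite big1 ?mulmx0 ?mul0mx ?addr0 ?mxE // => m _; rewrite mulmx0 mul0mx.
- rewrite mulmx_sumr mulmx_suml /pow_grad !summxE.
  apply: eq_bigr => m _; rewrite entry_mxtrace_delta.
  have -> : delta_mx a b *m (V *m (Z ^+ m *m delta_mx i j *m Z ^+ (k - m.+1)) *m W)
     = (delta_mx a b *m V *m Z ^+ m) *m delta_mx i j *m (Z ^+ (k - m.+1) *m W)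
     by rewrite !mulmxA.
  by rewrite mxtrace_mul_deltaM ?mulmxA.
- rewrite big1 ?mulmx0 ?mul0mx ?addr0 ?add0r => [|m _]; last by rewrite mulmx0 mul0mx.
  rewrite entry_mxtrace_delta.
  have -> : delta_mx a b *m (delta_mx x j *m Z ^+ k *m W)
     = delta_mx a b *m delta_mx x j *m (Z ^+ k *m W) by rewrite !mulmxA.
  by rewrite mxtrace_mul_deltaM ?mulmxA.
- rewrite big1 ?mulmx0 ?mul0mx ?addr0 ?add0r => [|m _]; last by rewrite mulmx0 mul0mx.
  rewrite entry_mxtrace_delta.
  have -> : delta_mx a b *m (V *m Z ^+ k *m delta_mx j x)
     = (delta_mx a b *m V *m Z ^+ k) *m delta_mx j x *m 1%:M by rewrite mulmx1 !mulmxA.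
  by rewrite mxtrace_mul_deltaM mul1mx.
Qed.

Lemma pderiv_trZ n d i X Z V W c :
  pderiv (@trZ n d i) X Z V W c = grad (pow_grad Z 1%:M i) 0 0 c.
Proof.
rewrite /pderiv /trZ.
have -> (M : 'M[{poly R}]_n) : (\tr M)`_1 = \tr (coef1_mx M).
  by rewrite /mxtrace coef_sum; apply: eq_bigr => l _; rewrite mxE.
rewrite coef1_mx_exp coef0_mxD coef1_mxD coef0_mx_const coef1_mx_const.
case: c => [[[x j]|[x j]]|[[x j]|[x j]]] /=;
  rewrite ?coef0_mx0 ?coef1_mx0 ?coef0_mx_dir ?coef1_mx_dir ?addr0 ?add0r ?mxE //.
all: try by rewrite big1 ?mxtrace0 // => m _; rewrite mulmx0 mul0mx.
rewrite raddf_sum /= /pow_grad summxE; apply: eq_bigr => m _.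
by rewrite mxtrace_mul_deltaM mulmx1.
Qed.
End Gradients.
Arguments grad {R n d}. Arguments pow_grad {R n}.
Arguments pderiv_tfun {R n d} k a b X Z V W c. Arguments pderiv_trZ {R n d} i X Z V W c.

Section IteratedSums.
Variable R : fieldType.

Lemma mxtrace_mul3_sum m p r (A : 'M[R]_(m, p)) (B : 'M[R]_(p, r)) (C : 'M[R]_(r, m)) :
  \tr (A *m B *m C) = \sum_j \sum_l \sum_i A j i * B i l * C l j.
Proof.
rewrite /mxtrace; apply: eq_bigr => j _; rewrite mxE; apply: eq_bigr => l _.
by rewrite mxE mulr_suml.
Qed.

Lemma sum3_rot (I J K : finType) (F : I -> J -> K -> R) :
  \sum_i \sum_j \sum_k F i j k = \sum_j \sum_k \sum_i F i j k.
Proof. rewrite exchange_big; apply: eq_bigr => j _; exact: exchange_big. Qed.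

Lemma sum3_swap (I J K : finType) (F : I -> J -> K -> R) :
  \sum_i \sum_j \sum_k F i j k = \sum_i \sum_k \sum_j F i j k.
Proof. apply: eq_bigr => i _; exact: exchange_big. Qed.

Lemma sum4_swap_pairs (I J K L : finType) (F : I -> J -> K -> L -> R) :
  \sum_i \sum_j \sum_k \sum_l F i j k l = \sum_k \sum_l \sum_i \sum_j F i j k l.
Proof.
transitivity (\sum_i \sum_k \sum_l \sum_j F i j k l).
  apply: eq_bigr => i _; rewrite exchange_big; apply: eq_bigr => k _; exact: exchange_big.
rewrite exchange_big; apply: eq_bigr => k _; exact: exchange_big.
Qed.

Lemma sum2D (I J : finType) (F G : I -> J -> R) :
  \sum_j \sum_l F j l + \sum_j \sum_l G j l = \sum_j \sum_l (F j l + G j l).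
Proof. rewrite -big_split; apply: eq_bigr => j _; by rewrite -big_split. Qed.

Lemma sum2Mr (I J : finType) c (F : I -> J -> R) :
  c * \sum_j \sum_l F j l = \sum_j \sum_l c * F j l.
Proof. rewrite mulr_sumr; apply: eq_bigr => j _; by rewrite mulr_sumr. Qed.

Lemma mul_sum2 (I J : finType) (f : I -> R) (g : J -> R) :
  (\sum_j f j) * (\sum_l g l) = \sum_j \sum_l f j * g l.
Proof. rewrite mulr_suml; apply: eq_bigr => j _; by rewrite mulr_sumr. Qed.

Lemma sum4D (I J K L : finType) (F G : I -> J -> K -> L -> R) :
  \sum_i \sum_j \sum_k \sum_l (F i j k l + G i j k l) =
  \sum_i \sum_j \sum_k \sum_l F i j k l + \sum_i \sum_j \sum_k \sum_l G i j k l.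
Proof.
rewrite -big_split; apply: eq_bigr => i _; rewrite -big_split; apply: eq_bigr => j _.
rewrite -big_split; apply: eq_bigr => k _; exact: big_split.
Qed.

Lemma sum4B (I J K L : finType) (F G : I -> J -> K -> L -> R) :
  \sum_i \sum_j \sum_k \sum_l (F i j k l - G i j k l) =
  \sum_i \sum_j \sum_k \sum_l F i j k l - \sum_i \sum_j \sum_k \sum_l G i j k l.
Proof.
rewrite -sumrB; apply: eq_bigr => i _; rewrite -sumrB; apply: eq_bigr => j _.
rewrite -sumrB; apply: eq_bigr => k _; exact: sumrB.
Qed.

Lemma sum4Mr (I J K L : finType) (c : R) (F : I -> J -> K -> L -> R) :
  \sum_i \sum_j \sum_k \sum_l (c * F i j k l) = c * \sum_i \sum_j \sum_k \sum_l F i j k l.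
Proof.
rewrite mulr_sumr; apply: eq_bigr => i _; rewrite mulr_sumr; apply: eq_bigr => j _.
rewrite mulr_sumr; apply: eq_bigr => k _; by rewrite mulr_sumr.
Qed.

Lemma sum4_swap_opp (I J K L : finType) (u : I -> J -> R) (v : K -> L -> R)
    (F : K -> L -> I -> J -> R) :
  \sum_i \sum_j \sum_k \sum_l u i j * v k l * - F k l i j
  = - \sum_k \sum_l \sum_i \sum_j v k l * u i j * F k l i j.
Proof. rewrite sum4_swap_pairs -[RHS]mulN1r -sum4Mr; do 4! (apply: eq_bigr => ? _); ring. Qed.
End IteratedSums.
Arguments sum4_swap_opp {R I J K L} u v F.

Section CoordinateBlocks.
Variables (R : fieldType) (n d : nat).
Local Notation crd := (Defs.coord n d).

Lemma sum_pair (K L : finType) (F : K * L -> R) : \sum_p F p = \sum_i \sum_j F (i, j).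
Proof. by rewrite pair_big; apply: eq_bigr => [[]]. Qed.

Lemma sum_coord (F : crd -> R) :
  \sum_c F c = \sum_i \sum_j F (inl (inl (i, j))) + \sum_i \sum_j F (inl (inr (i, j)))
             + \sum_a \sum_j F (inr (inl (a, j))) + \sum_a \sum_k F (inr (inr (a, k))).
Proof. by rewrite /Defs.coord !big_sumType !sum_pair /= addrA. Qed.

Variables (f g : crd -> R) (br : crd -> crd -> R).

Definition block_sum (K1 L1 K2 L2 : finType) (e1 : K1 -> L1 -> crd) (e2 : K2 -> L2 -> crd) :=
  \sum_i \sum_j \sum_k \sum_l f (e1 i j) * g (e2 k l) * br (e1 i j) (e2 k l).
Arguments block_sum {K1 L1 K2 L2}.

Hypothesis f_Xfree : forall i j, f (inl (inl (i, j))) = 0.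
Hypothesis g_Xfree : forall i j, g (inl (inl (i, j))) = 0.

Lemma sum_inner_coord {K1 L1 : finType} (e1 : K1 -> L1 -> crd) :
  \sum_i \sum_j \sum_c f (e1 i j) * g c * br (e1 i j) c =
  block_sum e1 (fun k l => inl (inr (k, l))) + block_sum e1 (fun k l => inr (inl (k, l)))
  + block_sum e1 (fun k l => inr (inr (k, l))).
Proof.
under eq_bigr => i _ do under eq_bigr => j _ do rewrite sum_coord.
rewrite -!sum2D /block_sum big1 ?add0r // => i _; rewrite big1 // => j _.
rewrite big1 // => k _; rewrite big1 // => l _; by rewrite g_Xfree mulr0 mul0r.
Qed.

Lemma sum_coord_blocks :
  \sum_c \sum_c' f c * g c' * br c c' =
    block_sum (fun i j => inl (inr (i, j))) (fun k l => inl (inr (k, l)))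
  + block_sum (fun i j => inl (inr (i, j))) (fun k l => inr (inl (k, l)))
  + block_sum (fun i j => inl (inr (i, j))) (fun k l => inr (inr (k, l)))
  + block_sum (fun i j => inr (inl (i, j))) (fun k l => inl (inr (k, l)))
  + block_sum (fun i j => inr (inl (i, j))) (fun k l => inr (inl (k, l)))
  + block_sum (fun i j => inr (inl (i, j))) (fun k l => inr (inr (k, l)))
  + block_sum (fun i j => inr (inr (i, j))) (fun k l => inl (inr (k, l)))
  + block_sum (fun i j => inr (inr (i, j))) (fun k l => inr (inl (k, l)))
  + block_sum (fun i j => inr (inr (i, j))) (fun k l => inr (inr (k, l))).
Proof.
rewrite sum_coord.
rewrite (sum_inner_coord (fun i j => inl (inr (i, j)))).
rewrite (sum_inner_coord (fun i j => inr (inl (i, j)))).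
rewrite (sum_inner_coord (fun i j => inr (inr (i, j)))).
rewrite big1 ?add0r => [|i _]; last first.
  by rewrite big1 // => j _; apply: big1 => c _; rewrite f_Xfree !mul0r.
by rewrite !addrA.
Qed.
End CoordinateBlocks.

Section BracketFormula.
Variables (R : fieldType) (n d : nat) (X Z : 'M[R]_n) (V : 'M[R]_(d, n)) (W : 'M[R]_(n, d)).
Local Notation h := (2^-1 : R).

Definition termVV (P P' : 'M[R]_(n, d)) : R :=
  h * \sum_a \sum_b ord_sign R b a *
        ((V *m P) b a * (V *m P') a b + (V *m P) a a * (V *m P') b b).

Definition termVW (P : 'M[R]_(n, d)) (Q' : 'M[R]_(d, n)) : R :=
  \sum_a ((Q' *m P) a a + h * (V *m P) a a * (Q' *m W) a a + h * (Q' *m P) a a * (V *m W) a a)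
  + h * \sum_a \sum_b ord_sign R a b *
        ((Q' *m P) b a * (V *m W) a b + (V *m P) a a * (Q' *m W) b b).

Definition termWW (Q Q' : 'M[R]_(d, n)) : R :=
  h * \sum_a \sum_b ord_sign R b a *
        ((Q *m W) a a * (Q' *m W) b b + (Q *m W) a b * (Q' *m W) b a).

Lemma blockZZ (A B Y : 'M[R]_n) :
  \sum_i \sum_j \sum_k \sum_l A j i * B l k * (h * (kd R k j * Y i l - kd R i l * Y k j))
  = h * (\tr (A *m Y *m B) - \tr (A *m B *m Y)).
Proof.
transitivity (h * (\sum_i \sum_j \sum_k \sum_l kd R k j * (A j i * B l k * Y i l)
                 - \sum_i \sum_j \sum_k \sum_l kd R i l * (A j i * B l k * Y k j))).
  rewrite -sum4B -sum4Mr; do 4! (apply: eq_bigr => ? _); ring.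
congr (_ * (_ - _)).
- transitivity (\sum_i \sum_j \sum_l A j i * B l j * Y i l).
    apply: eq_bigr => i _; apply: eq_bigr => j _.
    rewrite -(sum_kd_l j (fun k => \sum_l A j i * B l k * Y i l)).
    by apply: eq_bigr => k _; rewrite mulr_sumr.
  rewrite mxtrace_mul3_sum sum3_rot; do 3! (apply: eq_bigr => ? _); ring.
- transitivity (\sum_i \sum_j \sum_k A j i * B i k * Y k j).
    do 3! (apply: eq_bigr => ? _); by rewrite sum_kd_r.
  rewrite mxtrace_mul3_sum sum3_rot; do 3! (apply: eq_bigr => ? _); ring.
Qed.

Lemma blockZV (A : 'M[R]_n) (P : 'M[R]_(n, d)) :
  \sum_i \sum_j \sum_a \sum_l A j i * P l a * brUV V Z i j a l
  = h * (\tr (A *m P *m V *m Z) - \tr (A *m Z *m P *m V)).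
Proof.
transitivity (h * (\sum_i \sum_j \sum_a \sum_l kd R i l * (A j i * P l a * (V *m Z) a j)
                 - \sum_i \sum_j \sum_a \sum_l (A j i * P l a * V a j * Z i l))).
  rewrite -sum4B -sum4Mr; do 4! (apply: eq_bigr => ? _); rewrite /brUV; ring.
congr (_ * (_ - _)).
- transitivity (\sum_i \sum_j \sum_a A j i * P i a * (V *m Z) a j).
    do 3! (apply: eq_bigr => ? _); by rewrite sum_kd_r.
  rewrite -mulmxA mxtrace_mul3_sum sum3_rot; do 3! (apply: eq_bigr => ? _); ring.
- rewrite -(mulmxA A Z P) mxtrace_mul3_sum sum3_rot; do 3! (apply: eq_bigr => ? _).
  rewrite mxE mulr_sumr mulr_suml; apply: eq_bigr => ? _; ring.
Qed.

Lemma blockZW (A : 'M[R]_n) (Q : 'M[R]_(d, n)) :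
  \sum_i \sum_j \sum_a \sum_k A j i * Q a k * brUW W Z i j a k
  = h * (\tr (A *m Z *m W *m Q) - \tr (A *m W *m Q *m Z)).
Proof.
transitivity (h * (\sum_i \sum_j \sum_a \sum_k kd R k j * (A j i * Q a k * (Z *m W) i a)
                 - \sum_i \sum_j \sum_a \sum_k (A j i * W i a * (Q a k * Z k j)))).
  rewrite -sum4B -sum4Mr; do 4! (apply: eq_bigr => ? _); rewrite /brUW; ring.
congr (_ * (_ - _)).
- transitivity (\sum_i \sum_j \sum_a A j i * (Z *m W) i a * Q a j).
    apply: eq_bigr => i _; apply: eq_bigr => j _.
    rewrite exchange_big /= -(sum_kd_l j (fun k => \sum_a A j i * (Z *m W) i a * Q a k)).
    apply: eq_bigr => k _; rewrite mulr_sumr; apply: eq_bigr => ? _; ring.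
  rewrite -(mulmxA A Z W) mxtrace_mul3_sum sum3_rot; do 3! (apply: eq_bigr => ? _); ring.
- rewrite -(mulmxA (A *m W) Q Z) mxtrace_mul3_sum sum3_rot; do 3! (apply: eq_bigr => ? _).
  rewrite mxE mulr_sumr; apply: eq_bigr => ? _; ring.
Qed.

Lemma blockVV (P P' : 'M[R]_(n, d)) :
  \sum_a \sum_j \sum_b \sum_l P j a * P' l b *
     (h * ord_sign R b a * (V b j * V a l + V a j * V b l))
  = termVV P P'.
Proof.
rewrite /termVV sum3_swap mulr_sumr; apply: eq_bigr => a _.
rewrite mulr_sumr; apply: eq_bigr => b _.
rewrite !mxE !mul_sum2 sum2D !sum2Mr; do 2! (apply: eq_bigr => ? _); ring.
Qed.

Lemma blockWW (Q Q' : 'M[R]_(d, n)) :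
  \sum_a \sum_i \sum_b \sum_k Q a i * Q' b k *
     (h * ord_sign R b a * (W k b * W i a + W k a * W i b))
  = termWW Q Q'.
Proof.
rewrite /termWW sum3_swap mulr_sumr; apply: eq_bigr => a _.
rewrite mulr_sumr; apply: eq_bigr => b _.
rewrite !mxE !mul_sum2 sum2D !sum2Mr; do 2! (apply: eq_bigr => ? _); ring.
Qed.

Lemma blockVW_diag (P : 'M[R]_(n, d)) (Q : 'M[R]_(d, n)) (a : 'I_d) :
  \sum_j \sum_b \sum_k kd R a b * (P j a * Q b k *
     (kd R k j + h * (W k a * V a j) + h * (kd R k j * (V *m W) a a)))
  = (Q *m P) a a + h * (V *m P) a a * (Q *m W) a a + h * (Q *m P) a a * (V *m W) a a.
Proof.
transitivity (\sum_b kd R a b * \sum_j \sum_k P j a * Q b k *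
               (kd R k j + h * (W k a * V a j) + h * (kd R k j * (V *m W) a a))).
  by rewrite exchange_big; apply: eq_bigr => b _; rewrite sum2Mr.
rewrite sum_kd_r.
transitivity (\sum_j \sum_k kd R k j * (P j a * Q a k * (1 + h * (V *m W) a a))
   + h * ((\sum_j V a j * P j a) * (\sum_k Q a k * W k a))).
  rewrite mul_sum2 sum2Mr sum2D; do 2! (apply: eq_bigr => ? _); ring.
under eq_bigr => j _ do rewrite sum_kd_l.
rewrite !mxE -mulr_suml.
have -> : \sum_j P j a * Q a j = \sum_j Q a j * P j a.
  by apply: eq_bigr => ? _; rewrite mulrC.
ring.
Qed.

Lemma blockVW_offdiag (P : 'M[R]_(n, d)) (Q : 'M[R]_(d, n)) (a b : 'I_d) :
  \sum_j \sum_k h * ord_sign R a b * (P j a * Q b k * (kd R k j * (V *m W) a b + W k b * V a j))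
  = h * ord_sign R a b * ((Q *m P) b a * (V *m W) a b + (V *m P) a a * (Q *m W) b b).
Proof.
transitivity (h * ord_sign R a b * (\sum_j \sum_k kd R k j * (P j a * Q b k * (V *m W) a b)
   + (\sum_j V a j * P j a) * (\sum_k Q b k * W k b))).
  rewrite mul_sum2 sum2D sum2Mr; do 2! (apply: eq_bigr => ? _); ring.
under eq_bigr => j _ do rewrite sum_kd_l.
rewrite !mxE -mulr_suml.
have -> : \sum_j P j a * Q b j = \sum_j Q b j * P j a.
  by apply: eq_bigr => ? _; rewrite mulrC.
ring.
Qed.

Lemma blockVW (P : 'M[R]_(n, d)) (Q : 'M[R]_(d, n)) :
  \sum_a \sum_j \sum_b \sum_k P j a * Q b k * brVW V W a j b k = termVW P Q.
Proof.
rewrite /termVW /brVW.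
transitivity (\sum_a \sum_j \sum_b \sum_k kd R a b * (P j a * Q b k *
                 (kd R k j + h * (W k a * V a j) + h * (kd R k j * (V *m W) a a)))
  + \sum_a \sum_j \sum_b \sum_k h * ord_sign R a b * (P j a * Q b k *
                 (kd R k j * (V *m W) a b + W k b * V a j))).
  rewrite -sum4D; do 4! (apply: eq_bigr => ? _); ring.
congr (_ + _); first by apply: eq_bigr => a _; rewrite blockVW_diag.
rewrite sum3_swap mulr_sumr; apply: eq_bigr => a _; rewrite mulr_sumr.
by apply: eq_bigr => b _; rewrite blockVW_offdiag mulrA.
Qed.

Lemma mixed_trace (A : 'M[R]_n) (P : 'M[R]_(n, d)) (Q : 'M[R]_(d, n)) :
  \tr (A *m P *m V *m Z) - \tr (A *m Z *m P *m V)
  + (\tr (A *m Z *m W *m Q) - \tr (A *m W *m Q *m Z))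
  = \tr ((Z *m A - A *m Z) *m (P *m V - W *m Q)).
Proof.
rewrite mulmxBr !mulmxBl !raddfB /= !mulmxA.
rewrite [\tr (A *m P *m V *m Z)]mxtrace_mulC [\tr (A *m W *m Q *m Z)]mxtrace_mulC !mulmxA.
ring.
Qed.

Lemma qbr_grad {F G : pfun n d} {A B : 'M[R]_n} {P P' : 'M[R]_(n, d)} {Q Q' : 'M[R]_(d, n)} :
  (forall c, pderiv F X Z V W c = grad A P Q c) ->
  (forall c, pderiv G X Z V W c = grad B P' Q' c) ->
  qbr X Z V W F G =
    h * (\tr (A *m (Z *m Z) *m B) - \tr (A *m B *m (Z *m Z)))
  + h * \tr ((Z *m A - A *m Z) *m (P' *m V - W *m Q'))
  - h * \tr ((Z *m B - B *m Z) *m (P *m V - W *m Q))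
  + termVV P P' + termVW P Q' - termVW P' Q + termWW Q Q'.
Proof.
move=> dF dG; rewrite /qbr.
transitivity (\sum_c \sum_c' grad A P Q c * grad B P' Q' c' * brc X Z V W c c').
  by apply: eq_bigr => c _; apply: eq_bigr => c' _; rewrite dF dG.
rewrite (@sum_coord_blocks R n d (grad A P Q) (grad B P' Q') (brc X Z V W)) // /block_sum /=.
rewrite (sum4_swap_opp (fun i j => P j i) (fun k l => B l k) (fun k l i j => brUV V Z k l i j)).
rewrite (sum4_swap_opp (fun i j => Q i j) (fun k l => B l k) (fun k l i j => brUW W Z k l i j)).
rewrite (sum4_swap_opp (fun i j => Q i j) (fun k l => P' l k) (fun k l i j => brVW V W k l i j)).
rewrite blockZZ !blockZV !blockZW blockVV !blockVW blockWW.
rewrite -(mixed_trace A P' Q') -(mixed_trace B P Q); ring.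
Qed.

(* If both gradients satisfy the infinitesimal invariance relation
   P V - W Q = [Z, A], the mixed trace terms cancel by cyclicity. *)
Lemma qbr_invariant {F G : pfun n d} {A B : 'M[R]_n} {P P' : 'M[R]_(n, d)}
    {Q Q' : 'M[R]_(d, n)} :
  (forall c, pderiv F X Z V W c = grad A P Q c) ->
  (forall c, pderiv G X Z V W c = grad B P' Q' c) ->
  P *m V - W *m Q = Z *m A - A *m Z ->
  P' *m V - W *m Q' = Z *m B - B *m Z ->
  qbr X Z V W F G =
    h * (\tr (A *m (Z *m Z) *m B) - \tr (A *m B *m (Z *m Z)))
  + (termVV P P' + termVW P Q' - termVW P' Q + termWW Q Q').
Proof.
move=> dF dG invF invG; rewrite (qbr_grad dF dG) invF invG.
by rewrite [\tr ((Z *m B - B *m Z) *m _)]mxtrace_mulC addrK !addrA.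
Qed.
End BracketFormula.
Arguments termVV {R n d} V P P'. Arguments termVW {R n d} V W P Q'.
Arguments termWW {R n d} W Q Q'.
Arguments qbr_invariant {R n d X Z V W F G A B P P' Q Q'}.

Section PowerGradient.
Variables (R : fieldType) (n : nat).

Lemma pow_gradS (Z N : 'M[R]_n) k : pow_grad Z N k.+1 = Z *m pow_grad Z N k + N *m Z ^+ k.
Proof.
rewrite /pow_grad big_ord_recr /= subnn expr0 mul1mx; congr (_ + _).
rewrite mulmx_sumr; apply: eq_bigr => m _ /=.
have -> : (k.+1 - m.+1 = (k - m.+1).+1)%N by have := ltn_ord m; lia.
by rewrite exprS -mulmxE !mulmxA.
Qed.

Lemma pow_grad_commutator (Z N : 'M[R]_n) k :
  Z *m pow_grad Z N k - pow_grad Z N k *m Z = Z ^+ k *m N - N *m Z ^+ k.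
Proof.
elim: k => [|k IH].
  by rewrite /pow_grad big_ord0 mulmx0 mul0mx subrr expr0 mul1mx mulmx1 subrr.
rewrite pow_gradS mulmxDr mulmxDl.
have -> : Z *m (Z *m pow_grad Z N k) + Z *m (N *m Z ^+ k)
          - (Z *m pow_grad Z N k *m Z + N *m Z ^+ k *m Z)
   = Z *m (Z *m pow_grad Z N k - pow_grad Z N k *m Z) + (Z *m (N *m Z ^+ k) - N *m Z ^+ k *m Z).
  by rewrite mulmxBr !mulmxA opprD addrACA.
rewrite IH mulmxBr !mulmxA addrA subrK.
by rewrite {1}exprS exprSr -!mulmxE !mulmxA.
Qed.

Lemma trace_ZZ_commuting (Z A B : 'M[R]_n) : A *m Z = Z *m A ->
  \tr (A *m (Z *m Z) *m B) - \tr (A *m B *m (Z *m Z)) = 0.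
Proof.
move=> AZ; have AZZ : A *m (Z *m Z) = Z *m Z *m A by rewrite mulmxA AZ -!mulmxA AZ.
by rewrite AZZ -mulmxA mxtrace_mulC subrr.
Qed.

Lemma trace_ZZ_commutator (Z A B : 'M[R]_n) :
  \tr (A *m (Z *m Z) *m B) - \tr (A *m B *m (Z *m Z))
  = \tr ((Z *m (Z *m B - B *m Z) + (Z *m B - B *m Z) *m Z) *m A).
Proof.
have -> : Z *m (Z *m B - B *m Z) + (Z *m B - B *m Z) *m Z = Z *m Z *m B - B *m Z *m Z.
  by rewrite mulmxBr mulmxBl !mulmxA addrA subrK.
by rewrite mulmxBl raddfB /=; congr (_ - _); rewrite [RHS]mxtrace_mulC !mulmxA.
Qed.
End PowerGradient.

Section Invariance.
Variables (R : fieldType) (n d : nat) (Z : 'M[R]_n) (V : 'M[R]_(d, n)) (W : 'M[R]_(n, d)).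

(* Infinitesimal GL_n-invariance of t^k_{ab} and of tr Z^i. *)
Lemma tfun_grad_invariant k (a b : 'I_d) :
  Z ^+ k *m W *m delta_mx a b *m V - W *m (delta_mx a b *m V *m Z ^+ k)
  = Z *m pow_grad Z (W *m delta_mx a b *m V) k - pow_grad Z (W *m delta_mx a b *m V) k *m Z.
Proof. by rewrite pow_grad_commutator !mulmxA. Qed.

Lemma trZ_grad_invariant i :
  0 *m V - W *m 0 = Z *m pow_grad Z 1%:M i - pow_grad Z 1%:M i *m Z.
Proof. by rewrite pow_grad_commutator mulmx1 mul1mx mul0mx mulmx0 !subrr. Qed.
End Invariance.
Arguments tfun_grad_invariant {R n d} Z V W k a b.
Arguments trZ_grad_invariant {R n d} Z V W i.

Lemma terms_VW_zero (R : fieldType) (n d : nat) (V : 'M[R]_(d, n)) (W : 'M[R]_(n, d))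
    (P' : 'M[R]_(n, d)) (Q' : 'M[R]_(d, n)) :
  termVV V 0 P' + termVW V W 0 Q' - termVW V W P' 0 + termWW W 0 Q' = 0.
Proof.
rewrite /termVV /termVW /termWW !mulmx0 !mul0mx.
by rewrite !big1 // => *; rewrite ?big1 // => *; rewrite ?mxE; ring.
Qed.

Lemma qbr_trZ_tfun (R : fieldType) (n d : nat) X Z V W (i k : nat) (a b : 'I_d) :
  qbr X Z V W (@trZ n d i) (@tfun n d k b a) = 0 :> R.
Proof.
rewrite (qbr_invariant (pderiv_trZ i X Z V W) (pderiv_tfun k b a X Z V W)
          (trZ_grad_invariant Z V W i) (tfun_grad_invariant Z V W k b a)).
rewrite terms_VW_zero addr0 trace_ZZ_commuting ?mulr0 //.
by apply/eqP; rewrite eq_sym -subr_eq0 pow_grad_commutator mulmx1 mul1mx subrr.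
Qed.

Section WindowSums.
Variables (R : fieldType) (tg ta : nat -> R) (k l : nat).
Let G j := tg (k + l - j)%N * ta j.
Let S a b := \sum_(a <= j < b) G j.

Lemma sum_ord_shift c : \sum_(m < k) G (m + c)%N = S c (k + c).
Proof. by rewrite /S -[X in \sum_(X <= _ < _) _]add0n big_addn addnK big_mkord. Qed.

Lemma sum_nat_shift a b c : \sum_(a <= i < b) G (i + c)%N = S (a + c) (b + c).
Proof. by rewrite /S big_addn addnK. Qed.

Lemma telescoped_sums :
  \sum_(m < k) (G (m + l + 1)%N - G (m + 1)%N + G (m + l)%N - G m)
  = S l.+1 (k + l).+1 - S 1 k.+1 + S l (k + l) - S 0 k.
Proof.
rewrite sumrB big_split /= sumrB.
have -> : \sum_(m < k) G (m + l + 1)%N = S l.+1 (k + l).+1.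
  rewrite (eq_bigr (fun m : 'I_k => G (m + l.+1)%N)) => [|m _]; last by rewrite addn1 addnS.
  by rewrite sum_ord_shift addnS.
rewrite sum_ord_shift addn1 sum_ord_shift.
by rewrite (eq_bigr (fun m : 'I_k => G (m + 0)%N)) ?sum_ord_shift ?addn0 // => m _; rewrite addn0.
Qed.

Lemma sum_up_window :
  \sum_(1 <= tau < k.+1) tg (k - tau)%N * ta (l + tau)%N = S l.+1 (k + l).+1.
Proof.
rewrite (eq_big_nat _ _ (F2 := fun tau => G (tau + l)%N)) => [|i /andP[i1 ik]].
  by rewrite sum_nat_shift add1n addSn.
rewrite /G; congr (tg _ * ta _); lia.
Qed.

Lemma sum_low_window :
  \sum_(1 <= s < l.+1) tg (k + s)%N * ta (l - s)%N = S 0 l.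
Proof.
rewrite (eq_big_nat _ _ (F2 := fun s => G (l - s)%N)) => [|i /andP[i1 il]]; last first.
  rewrite /G; congr (tg _ * ta _); lia.
rewrite big_add1 /= /S big_nat_rev /=; apply: eq_big_nat => i /andP[_ il].
by congr G; lia.
Qed.

Lemma sum_high_window :
  \sum_(1 <= s < l) tg s * ta (k + l - s)%N = S k.+1 (k + l).
Proof.
rewrite (eq_big_nat _ _ (F2 := fun s => G (k + l - s)%N)) => [|i /andP[i1 il]]; last first.
  rewrite /G; congr (tg _ * ta _); lia.
rewrite big_nat_rev /= (eq_big_nat _ _ (F2 := fun s => G (s + k)%N)) => [|i /andP[i1 il]].
  by rewrite sum_nat_shift add1n addnC.
by congr G; lia.
Qed.

(* Comparing the window sums: both sides differ by splitting windows at k. *)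
Lemma reindex_ZZ_sums : (0 < k)%N -> (0 < l)%N ->
  \sum_(m < k) (G (m + l + 1)%N - G (m + 1)%N + G (m + l)%N - G m) =
   (\sum_(1 <= tau < k.+1) tg (k - tau)%N * ta (l + tau)%N
    - \sum_(1 <= tau < k) tg (k + l - tau)%N * ta tau)
 - (\sum_(1 <= s < l.+1) tg (k + s)%N * ta (l - s)%N
    - \sum_(1 <= s < l) tg s * ta (k + l - s)%N).
Proof.
move=> k_gt0 l_gt0; rewrite telescoped_sums sum_up_window sum_low_window sum_high_window.
have splitk1 : S 1 k.+1 = S 1 k + G k by rewrite /S big_nat_recr.
have split0kl : S 0 (k + l) = S 0 l + S l (k + l) by rewrite /S (big_cat_nat (n := l)) ?leq_addl.
have split0kl' : S 0 (k + l) = S 0 k + S k (k + l) by rewrite /S (big_cat_nat (n := k)) ?leq_addr.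
have splitkl : S k (k + l) = G k + S k.+1 (k + l).
  by rewrite /S big_ltn // -{1}[k]addn0 ltn_add2l.
have -> : S l (k + l) = S 0 k + G k + S k.+1 (k + l) - S 0 l.
  by rewrite -(addrA (S 0 k)) -splitkl -split0kl' split0kl addrAC subrr add0r.
rewrite splitk1 /S; ring.
Qed.
End WindowSums.

Lemma ord_signC (R : fieldType) d (x y : 'I_d) : ord_sign R x y = - ord_sign R y x.
Proof.
rewrite /ord_sign (eq_sym y x); have [//|ne] := eqVneq x y; first by rewrite oppr0.
case: (ltngtP x y) => [//|//|xy]; last by case/eqP: ne; apply: val_inj.
by rewrite opprK.
Qed.
Arguments ord_signC {R d} x y.

(* The scalar V/W terms of {t^k_{ge}, t^l_{ab}}, written through the matrices
   T_p = V Z^p W, whose entries are T_p y x = t^p_{xy}. *)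
Section TfunScalarTerms.
Variables (R : fieldType) (n d : nat) (X Z : 'M[R]_n) (V : 'M[R]_(d, n)) (W : 'M[R]_(n, d)).
Local Notation h := (2^-1 : R).
Local Notation t p x y := (@tfun n d p x y R X Z V W).
Local Notation T p := (V *m Z ^+ p *m W).

Lemma termVV_tfun k l (g e a b : 'I_d) :
  termVV V (Z ^+ k *m W *m delta_mx g e) (Z ^+ l *m W *m delta_mx a b)
  = h * ord_sign R b e * (t k g b * t l a e + t k g e * t l a b).
Proof.
rewrite /termVV /tfun !mulmxA -mulrA; congr (_ * _).
rewrite -(sum2_kd e b (fun x y => ord_sign R y x * ((T k) y g * (T l) x a + (T k) x g * (T l) y a))).
by do 2! (apply: eq_bigr => ? _); rewrite !mul_delta_entry_r; ring.
Qed.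

Lemma termWW_tfun k l (g e a b : 'I_d) :
  termWW W (delta_mx g e *m V *m Z ^+ k) (delta_mx a b *m V *m Z ^+ l)
  = h * ord_sign R a g * (t k g e * t l a b + t k a e * t l g b).
Proof.
rewrite /termWW /tfun -!(mulmxA (delta_mx _ _)) -mulrA; congr (_ * _).
rewrite -(sum2_kd g a (fun x y => ord_sign R y x * ((T k) e x * (T l) b y + (T k) e y * (T l) b x))).
by do 2! (apply: eq_bigr => ? _); rewrite !mul_delta_entry_l (kd_sym g) (kd_sym a); ring.
Qed.

(* The V-W term; note Q' P = e_ab T_(l+k) e_ge. *)
Lemma termVW_tfun k l (g e a b : 'I_d) :
  termVW V W (Z ^+ k *m W *m delta_mx g e) (delta_mx a b *m V *m Z ^+ l)
  = kd R a e * (t (l + k) g b + h * t k g e * t l a b + h * t (l + k) g b * t 0 a e)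
  + h * ord_sign R e a * (t (l + k) g b * t 0 a e + t k g e * t l a b).
Proof.
have QP : delta_mx a b *m V *m Z ^+ l *m (Z ^+ k *m W *m delta_mx g e)
          = delta_mx a b *m T (l + k) *m delta_mx g e by rewrite exprD -mulmxE !mulmxA.
have VW0 : V *m W = T 0 by rewrite expr0 mulmx1.
have VP : V *m (Z ^+ k *m W *m delta_mx g e) = T k *m delta_mx g e by rewrite !mulmxA.
have QW : delta_mx a b *m V *m Z ^+ l *m W = delta_mx a b *m T l by rewrite !mulmxA.
rewrite /termVW /tfun QP VW0 VP QW.
congr (_ + _).
- transitivity (\sum_x kd R e x * (kd R x a * ((T (l + k)) b g
      + h * (T k) x g * (T l) b x + h * (T (l + k)) b g * (T 0) x x))).
    by apply: eq_bigr => x _; rewrite !mul_delta2_entry !mul_delta_entry_r !mul_delta_entry_l; ring.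
  rewrite sum_kd_r; have [-> //|ne] := eqVneq a e.
  by rewrite /kd (negbTE ne) eq_sym (negbTE ne) !mul0r.
- rewrite -mulrA; congr (_ * _).
  rewrite -(sum2_kd e a (fun x y => ord_sign R x y * ((T (l + k)) b g * (T 0) x y
                                                      + (T k) x g * (T l) b y))).
  by do 2! (apply: eq_bigr => ? _); rewrite !mul_delta2_entry !mul_delta_entry_r
       !mul_delta_entry_l (kd_sym a); ring.
Qed.
End TfunScalarTerms.

Section TfunZZTerm.
Variables (R : fieldType) (n d : nat) (X Z : 'M[R]_n) (V : 'M[R]_(d, n)) (W : 'M[R]_(n, d)).
Variables (g e a b : 'I_d).
Local Notation h := (2^-1 : R).
Local Notation t p x y := (@tfun n d p x y R X Z V W).
Local Notation N := (W *m delta_mx g e *m V).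
Local Notation N' := (W *m delta_mx a b *m V).

Lemma mxtrace_pow_pair s u r v :
  \tr (Z ^+ s *m N' *m Z ^+ u *m (Z ^+ r *m N *m Z ^+ v)) = t (u + r) g b * t (v + s) a e.
Proof.
have -> : Z ^+ s *m N' *m Z ^+ u *m (Z ^+ r *m N *m Z ^+ v)
  = Z ^+ s *m W *m (delta_mx a b *m V *m Z ^+ u *m Z ^+ r *m W *m delta_mx g e *m V *m Z ^+ v)
  by rewrite !mulmxA.
rewrite mxtrace_mulC.
have -> : delta_mx a b *m V *m Z ^+ u *m Z ^+ r *m W *m delta_mx g e *m V *m Z ^+ v *m (Z ^+ s *m W)
  = delta_mx a b *m (V *m Z ^+ (u + r) *m W) *m delta_mx g e *m (V *m Z ^+ (v + s) *m W)
  by rewrite !exprD -!mulmxE !mulmxA.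
by rewrite mxtrace_delta2.
Qed.

Variables (k l : nat).
Let G j := t (k + l - j)%N g b * t j a e.

Lemma ZZ_trace_summand m : (m < k)%N ->
  \tr ((Z *m (Z ^+ l *m N' - N' *m Z ^+ l) + (Z ^+ l *m N' - N' *m Z ^+ l) *m Z)
        *m (Z ^+ (k - m.+1) *m N *m Z ^+ m))
  = G (m + l + 1)%N - G (m + 1)%N + G (m + l)%N - G m.
Proof.
move=> mk.
have -> : Z *m (Z ^+ l *m N' - N' *m Z ^+ l) + (Z ^+ l *m N' - N' *m Z ^+ l) *m Z
  = Z ^+ l.+1 *m N' *m Z ^+ 0 - Z ^+ 1 *m N' *m Z ^+ l
    + (Z ^+ l *m N' *m Z ^+ 1 - Z ^+ 0 *m N' *m Z ^+ l.+1).
  by rewrite expr0 expr1 mulmx1 mul1mx {1}exprS exprSr -!mulmxE mulmxBr mulmxBl !mulmxA.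
rewrite mulmxDl !mulmxBl raddfD !raddfB /= !mxtrace_pow_pair !addrA /G.
congr (_ - _ + _ - _); congr (t _ _ _ * t _ _ _); lia.
Qed.

Lemma ZZ_term_tfun :
  h * (\tr (pow_grad Z N k *m (Z *m Z) *m pow_grad Z N' l)
       - \tr (pow_grad Z N k *m pow_grad Z N' l *m (Z *m Z)))
  = if (0 < k)%N && (0 < l)%N then
      h * (\sum_(1 <= tau < k.+1) t (k - tau)%N g b * t (l + tau)%N a e
           - \sum_(1 <= tau < k) t (k + l - tau)%N g b * t tau a e)
      - h * (\sum_(1 <= s < l.+1) t (k + s)%N g b * t (l - s)%N a e
             - \sum_(1 <= s < l) t s g b * t (k + l - s)%N a e)
    else 0.
Proof.
rewrite trace_ZZ_commutator pow_grad_commutator /pow_grad mulmx_sumr raddf_sum /=.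
under eq_bigr => m _ do rewrite (ZZ_trace_summand _ (ltn_ord m)).
have [->|k_gt0] := posnP k; first by rewrite big_ord0 mulr0.
have [l0|l_gt0] := posnP l.
  by rewrite l0 andbF big1 ?mulr0 // => m _ /=; rewrite /G !addn0; ring.
rewrite /= (@reindex_ZZ_sums R (fun p => t p g b) (fun p => t p a e) k l k_gt0 l_gt0).
ring.
Qed.
End TfunZZTerm.

Lemma qbr_tfun_tfun (R : fieldType) (n d : nat) X Z V W (k l : nat) (a b g e : 'I_d) :
  let t k (a b : 'I_d) := @tfun n d k a b R X Z V W in
  let o := @ord_sign R d in
  let dl (x y : 'I_d) := @kd R _ x y in
     qbr X Z V W (@tfun n d k g e) (@tfun n d l a b) =
       2^-1 * (o g b + o e a - o e b - o g a) * t k g e * t l a b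
     + 2^-1 * o g b * t (k + l)%N a e * t 0%N g b
     + 2^-1 * o e a * t 0%N a e * t (k + l)%N g b
     - 2^-1 * o e b * t l a e * t k g b
     - 2^-1 * o g a * t k a e * t l g b
     - dl g b * (t (k + l)%N a e + 2^-1 * t (k + l)%N a e * t 0%N g b
                 + 2^-1 * t k g e * t l a b)
     + dl a e * (t (k + l)%N g b + 2^-1 * t 0%N a e * t (k + l)%N g b
                 + 2^-1 * t k g e * t l a b)
     + (if (0 < k)%N && (0 < l)%N then
          2^-1 * (\sum_(1 <= tau < k.+1) t (k - tau)%N g b * t (l + tau)%N a e
                  - \sum_(1 <= tau < k) t (k + l - tau)%N g b * t tau a e)
        - 2^-1 * (\sum_(1 <= s < l.+1) t (k + s)%N g b * t (l - s)%N a e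
                  - \sum_(1 <= s < l) t s g b * t (k + l - s)%N a e)
        else 0).
Proof.
move=> t o dl.
rewrite (qbr_invariant (pderiv_tfun k g e X Z V W) (pderiv_tfun l a b X Z V W)
          (tfun_grad_invariant Z V W k g e) (tfun_grad_invariant Z V W l a b)).
rewrite (@ZZ_term_tfun _ _ _ X) (@termVV_tfun _ _ _ X) (@termWW_tfun _ _ _ X).
rewrite !(@termVW_tfun _ _ _ X) (addnC l k).
rewrite /t /o /dl (ord_signC b e) (ord_signC a g) (ord_signC b g).
case: ifP => _; ring.
Qed.

(* The theorem holds at every point (X, Z, V, W). *)
Theorem mainTheorem8 (R : numClosedFieldType) (n d : nat) (q : R) :
  (1 <= n)%N -> (1 <= d)%N -> q != 0 ->
  (forall m : nat, (0 < m)%N -> q ^+ m != 1) ->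
  forall (X Z : 'M[R]_n) (V : 'M[R]_(d, n)) (W : 'M[R]_(n, d)),
  inMx q X Z V W ->
  let t k (a b : 'I_d) := @tfun n d k a b R X Z V W in
  let o := @ord_sign R d in
  let dl (x y : 'I_d) := @kd R _ x y in
  (forall (i k : nat) (a b : 'I_d), (1 <= i)%N ->
     qbr X Z V W (@trZ n d i) (@tfun n d k b a) = 0) /\
  (forall (k l : nat) (a b g e : 'I_d),
     qbr X Z V W (@tfun n d k g e) (@tfun n d l a b) =
       2^-1 * (o g b + o e a - o e b - o g a) * t k g e * t l a b
     + 2^-1 * o g b * t (k + l)%N a e * t 0%N g b
     + 2^-1 * o e a * t 0%N a e * t (k + l)%N g b
     - 2^-1 * o e b * t l a e * t k g b
     - 2^-1 * o g a * t k a e * t l g b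
     - dl g b * (t (k + l)%N a e + 2^-1 * t (k + l)%N a e * t 0%N g b
                 + 2^-1 * t k g e * t l a b)
     + dl a e * (t (k + l)%N g b + 2^-1 * t 0%N a e * t (k + l)%N g b
                 + 2^-1 * t k g e * t l a b)
     + (if (0 < k)%N && (0 < l)%N then
          2^-1 * (\sum_(1 <= tau < k.+1) t (k - tau)%N g b * t (l + tau)%N a e
                  - \sum_(1 <= tau < k) t (k + l - tau)%N g b * t tau a e)
        - 2^-1 * (\sum_(1 <= s < l.+1) t (k + s)%N g b * t (l - s)%N a e
                  - \sum_(1 <= s < l) t s g b * t (k + l - s)%N a e)
        else 0)).
Proof.
move=> _ _ _ _ X Z V W _ t o dl; split.
- by move=> i k a b _; exact: qbr_trZ_tfun.
- by move=> k l a b g e; exact: qbr_tfun_tfun.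
Qed.
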